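(* Let $G=K_{n_1}\times\cdots\times K_{n_d}$, where each $n_j\geq 2$ is even. Then for every vertex $u$ of $G$, $\uparrow^{2}G$ has Laplacian perfect state transfer between $(0,u)$ and $(1,u)$.
   Context: All graphs are simple, undirected and unweighted. $K_n$ is the complete graph on $n$ vertices. The direct product $G\times H$ is the graph with adjacency matrix $A(G)\otimes A(H)$. The blow-up $\uparrow^{2}G$ has vertex set $\mathbb{Z}_2\times V(G)$, with $(l,u)\sim(m,v)$ iff $u\sim v$ in $G$. A graph with Laplacian $L=D-A$ has Laplacian perfect state transfer between $a,b$ if $\exp(i\tau L)\mathbf{e}_a=\gamma\mathbf{e}_b$ for some $\tau>0$, $\gamma\in\mathbb{C}$. *)

From mathcomp Require Import all_boot all_order all_algebra.
From mathcomp Require Import all_classical all_reals all_analysis.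
From mathcomp Require Import complex.
Import GRing.Theory Num.Theory numFieldNormedType.Exports.
Set Implicit Arguments. Unset Strict Implicit. Unset Printing Implicit Defensive.
Local Open Scope ring_scope.

(* Matrix exponential of a complex matrix M (over C = R[i]):
   exp(M) = sum_{k>=0} M^k / k!, taken entrywise as the limit of the partial
   sums (limits of real and imaginary parts separately, i.e. the limit in C). *)
Definition cexpmx (R : realType) (m : nat) (M : 'M[R[i]]_m) : 'M[R[i]]_m :=
  let S := fun N : nat => \sum_(k < N) ((k`!)%:R)^-1 *: M ^+ k in
  \matrix_(a, b) Complex (limn (fun N => complex.Re (S N a b)))
                         (limn (fun N => complex.Im (S N a b))).

(* A graph on a finite vertex type T is given by its adjacency relation e;
   matrices are indexed by 'I_#|T| via enum_val / enum_rank. *)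
Definition laplacian (R : pzRingType) (T : finType) (e : rel T) : 'M[R]_#|T| :=
  \matrix_(a, b)
    ((a == b)%:R * (#|[pred y | e (enum_val a) y]|)%:R
     - (e (enum_val a) (enum_val b))%:R).

Definition evec (R : pzRingType) (T : finType) (a : T) : 'cV[R]_#|T| :=
  delta_mx (enum_rank a) 0.

Definition lap_pst (R : realType) (T : finType) (e : rel T) (a b : T) : Prop :=
  exists tau : R, 0 < tau /\
    exists gamma : R[i],
      cexpmx (Complex 0 tau *: laplacian R[i] e) *m evec R[i] a
      = gamma *: evec R[i] b.

Notation prodK_vertex n := {dffun forall j, 'I_(n j)}.

(* Direct product of complete graphs: x ~ y iff x_j ~ y_j in K_{n_j} for all j,
   i.e. x_j != y_j for every coordinate j. *)
Definition prodK_adj (d : nat) (n : 'I_d -> nat) : rel (prodK_vertex n) :=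
  fun x y => [forall j, x j != y j].

Definition blowup2 (T : finType) (e : rel T) : rel ('I_2 * T) :=
  fun p q => e p.2 q.2.

From mathcomp Require Import all_boot all_order all_algebra.
From mathcomp Require Import all_classical all_reals all_analysis.
From mathcomp Require Import complex.
From mathcomp Require Import ring.
Import GRing.Theory Num.Theory numFieldNormedType.Exports.
Set Implicit Arguments. Unset Strict Implicit. Unset Printing Implicit Defensive.
Local Open Scope ring_scope.

(** Write K = prod_j (n_j - 1) for the degree of G.  Tensor products of the
    eigenvectors 1 and e_(u_j) - 1/n_j of the complete graphs K_(n_j) are
    adjacency eigenvectors phi_S of G, with eigenvalues mu_S that are products
    of factors n_j - 1 and -1, and they sum to e_u.  In the blow-up, the lift
    (l, x) |-> phi_S x has Laplacian eigenvalue 2 (K - mu_S), and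
    (l, x) |-> (-1)^l e_u(x) has eigenvalue 2 K.  Since
    e_(0,u) = ((-1)^l e_u + sum_S phi_S) / 2, at time pi/2 the antisymmetric
    part is multiplied by e^(i pi K) and each phi_S by e^(i pi (K - mu_S)).
    All n_j being even makes K and every mu_S odd, so these phases are -1 and 1
    and the state becomes e_(1,u). *)

Lemma big_option (V : nmodType) (T : finType) (F : option T -> V) :
  \sum_(o : option T) F o = F None + \sum_(t : T) F (Some t).
Proof.
by rewrite ![index_enum _]unlock [@Finite.enum in LHS]unlock/= big_cons big_map.
Qed.

Lemma bigA_distr_bigA_dep (R : comPzRingType) (I : finType) (T_ : I -> finType)
    (F : forall i, T_ i -> R) :
  \prod_i \sum_(t : T_ i) F i t =
  \sum_(y : {dffun forall i, T_ i}) \prod_i F i (y i).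
Proof.
pose P_ i := [ffun t : T_ i => F i t].
have := @big_fprod R 0 1 *%R +%R I T_ P_.
rewrite -(bigA_distr_big_dep (tagged_with T_) (fun i => untag 0 (P_ i))).
move=> sum_fprod.
transitivity (\prod_i \sum_(t : T_ i) P_ i t).
  by apply: eq_bigr => i _; apply: eq_bigr => t _; rewrite ffunE.
under eq_bigr do rewrite (big_tag (fun i => (P_ i : T_ i -> R))).
rewrite -sum_fprod (reindex (@fprod_of_dffun I T_)); last first.
  by exists (@dffun_of_fprod I T_) => x _; rewrite ?fprod_of_dffunK ?dffun_of_fprodK.
by apply: eq_bigr => y _; apply: eq_bigr => i _; rewrite ffunE /fprod_of_dffun fprodE.
Qed.

Section Indicators.
Variable R : comPzRingType.

Lemma sum_indicator_neq (T : finType) (y : T) (g : T -> R) :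
  \sum_t (y != t)%:R * g t = \sum_t g t - g y.
Proof.
rewrite (bigD1 y) //= [in RHS](bigD1 y) //= eqxx mul0r add0r addrAC subrr add0r.
by apply: eq_bigr => t; rewrite eq_sym => ->; rewrite mul1r.
Qed.

Lemma sum_indicator_eq (T : finType) (y : T) : \sum_t ((t == y)%:R : R) = 1.
Proof. by rewrite (bigD1 y) //= eqxx big1 ?addr0 // => t /negbTE ->. Qed.

Lemma prod_indicator (I : finType) (P : pred I) :
  \prod_i ((P i)%:R : R) = [forall i, P i]%:R.
Proof.
have [/forallP allP | /forallPn [i /negbTE Pi]] := boolP [forall i, P i].
  by rewrite big1 // => i _; rewrite allP.
by rewrite (bigD1 i) //= Pi mul0r.
Qed.

End Indicators.

Lemma odd_absz_prod (I : finType) (a : I -> int) :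
  (forall i, odd `|a i|) -> odd `|\prod_i a i|.
Proof.
move=> a_odd.
rewrite (big_morph (fun z : int => `|z|%N) abszM (erefl : `|1%R|%N = 1%N)).
by apply: (big_ind odd) => // x y; rewrite oddM => -> ->.
Qed.

Section LaplacianAction.
Variables (R : comPzRingType) (T : finType).

Definition cvec_of (f : T -> R) : 'cV[R]_#|T| := \col_a f (enum_val a).

Lemma evecE (a : T) : evec R a = cvec_of (fun x => (x == a)%:R).
Proof.
apply/matrixP => i j; rewrite !mxE ord1 eqxx andbT.
by rewrite -(inj_eq (bij_inj (@enum_val_bij T))) enum_rankK.
Qed.

Lemma laplacian_cvec (e : rel T) (f : T -> R) :
  laplacian R e *m cvec_of f =
  cvec_of (fun x => \sum_y (e x y)%:R * (f x - f y)).
Proof.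
apply/matrixP => a j; rewrite !mxE.
under eq_bigr do rewrite !mxE mulrBl.
under [RHS]eq_bigr do rewrite mulrBr.
rewrite !sumrB -mulr_suml; congr (_ - _).
  rewrite (bigD1 a) //= eqxx mul1r big1 => [|c /negbTE]; last first.
    by rewrite eq_sym => ->; rewrite !mul0r.
  rewrite addr0 -sum1_card natr_sum big_mkcond /=; congr (_ * _).
  by apply: eq_bigr => y _; rewrite inE; case: (e _ y).
rewrite (reindex (@enum_rank T)); last exact/onW_bij/enum_rank_bij.
by apply: eq_bigr => y _; rewrite enum_rankK.
Qed.

End LaplacianAction.

Section BlowUp.
Variables (R : comPzRingType) (T : finType) (e : rel T).
Local Notation W := ('I_2 * T)%type.

Lemma sum_blowup2_vertices (F : W -> R) :
  \sum_(w : W) F w = \sum_x F (ord0, x) + \sum_x F (ord_max, x).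
Proof.
transitivity (\sum_(w : W) F (w.1, w.2)); first by apply: eq_bigr => -[].
rewrite -(pair_bigA _ (fun l x => F (l, x))) big_ord_recl big_ord1.
by congr (_ + _); apply: eq_bigr => x _; congr (F (_, x)); apply: val_inj.
Qed.

Lemma laplacian_blowup2_sym (f : T -> R) :
  laplacian R (blowup2 e) *m cvec_of (fun w : W => f w.2) =
  cvec_of (fun w : W => (\sum_y (e w.2 y)%:R * (f w.2 - f y)) *+ 2).
Proof.
rewrite !laplacian_cvec; congr cvec_of; apply/funext => w.
by rewrite sum_blowup2_vertices.
Qed.

Lemma laplacian_blowup2_antisym (g : T -> R) :
  laplacian R (blowup2 e) *m cvec_of (fun w : W => (-1) ^+ w.1 * g w.2) =
  cvec_of (fun w : W => (\sum_y (e w.2 y)%:R) *+ 2 * ((-1) ^+ w.1 * g w.2)).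
Proof.
rewrite laplacian_cvec; congr cvec_of; apply/funext => w.
rewrite sum_blowup2_vertices -big_split mulrnAl mulr_suml -sumrMnl /=.
by apply: eq_bigr => y _; rewrite /blowup2 /=; ring.
Qed.

End BlowUp.

Section ProductOfCompleteGraphs.
Variables (R : numFieldType) (d : nat) (n : 'I_d -> nat).
Hypothesis n_gt0 : forall j, (0 < n j)%N.
Local Notation V := (prodK_vertex n).

Lemma sum_prodK_adj_prod (x : V) (h : forall j, 'I_(n j) -> R) :
  \sum_y (prodK_adj x y)%:R * \prod_j h j (y j) =
  \prod_j \sum_t (x j != t)%:R * h j t.
Proof.
rewrite bigA_distr_bigA_dep; apply: eq_bigr => y _.
by rewrite -prod_indicator -big_split.
Qed.

Definition prodK_degree : int := \prod_j ((n j)%:Z - 1).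

Lemma sum_prodK_adj (x : V) : \sum_y ((prodK_adj x y)%:R : R) = prodK_degree%:~R.
Proof.
transitivity (\sum_y (prodK_adj x y)%:R * \prod_j (fun _ _ => 1 : R) j (y j)).
  by apply: eq_bigr => y _; rewrite big1 ?mulr1.
rewrite (sum_prodK_adj_prod x (fun _ _ => 1)) rmorph_prod; apply: eq_bigr => j _.
by rewrite (sum_indicator_neq _ (fun=> 1)) sumr_const card_ord rmorphB.
Qed.

Variable u : V.

(* The constant vector (eigenvalue n_j - 1) and e_(u_j) minus its mean
   (eigenvalue -1) are adjacency eigenvectors of K_(n_j) summing to e_(u_j). *)
Definition complete_eigvec (b : bool) j (t : 'I_(n j)) : R :=
  if b then (n j)%:R^-1 else (t == u j)%:R - (n j)%:R^-1.

Definition complete_eigval (b : bool) j : int := if b then (n j)%:Z - 1 else -1.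

Lemma complete_adj_eigen b j (y : 'I_(n j)) :
  \sum_t (y != t)%:R * complete_eigvec b t =
  (complete_eigval b j)%:~R * complete_eigvec b y.
Proof.
have nj_neq0 : (n j)%:R != 0 :> R by rewrite pnatr_eq0 -lt0n n_gt0.
rewrite sum_indicator_neq /complete_eigvec /complete_eigval.
case: b; rewrite ?sumrB ?sum_indicator_eq sumr_const card_ord.
all: by field.
Qed.

Definition prodK_eigvec (S : {ffun 'I_d -> bool}) (x : V) : R :=
  \prod_j complete_eigvec (S j) (x j).

Definition prodK_eigval (S : {ffun 'I_d -> bool}) : int :=
  \prod_j complete_eigval (S j) j.

Lemma prodK_adj_eigen S (x : V) :
  \sum_y (prodK_adj x y)%:R * prodK_eigvec S y =
  (prodK_eigval S)%:~R * prodK_eigvec S x.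
Proof.
rewrite (sum_prodK_adj_prod x (fun j t => complete_eigvec (S j) t)).
under eq_bigr do rewrite complete_adj_eigen.
by rewrite big_split rmorph_prod.
Qed.

Lemma prodK_laplacian_eigen S (x : V) :
  \sum_y (prodK_adj x y)%:R * (prodK_eigvec S x - prodK_eigvec S y) =
  (prodK_degree - prodK_eigval S)%:~R * prodK_eigvec S x.
Proof.
under eq_bigr do rewrite mulrBr.
by rewrite sumrB -mulr_suml sum_prodK_adj prodK_adj_eigen intrB mulrBl.
Qed.

Lemma sum_prodK_eigvec (x : V) : \sum_S prodK_eigvec S x = (x == u)%:R.
Proof.
rewrite -(bigA_distr_bigA (fun j b => complete_eigvec b (x j))).
under eq_bigr do rewrite big_bool /= addrCA subrr addr0.
rewrite prod_indicator; congr (nat_of_bool _ )%:R.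
by apply/forallP/eqP => [x_u | -> j //]; apply/ffunP => j; apply/eqP/x_u.
Qed.

Hypothesis n_even : forall j, ~~ odd (n j).

Lemma odd_complete_eigval b j : odd `|complete_eigval b j|.
Proof.
case: b => //=; rewrite subzn ?n_gt0 //= oddB ?n_gt0 //.
by rewrite (negbTE (n_even j)).
Qed.

Lemma odd_prodK_degree : odd `|prodK_degree|.
Proof. by apply: odd_absz_prod => j; apply: (odd_complete_eigval true). Qed.

Lemma odd_prodK_eigval S : odd `|prodK_eigval S|.
Proof. by apply: odd_absz_prod => j; apply: odd_complete_eigval. Qed.

End ProductOfCompleteGraphs.

Section MatrixExponential.
Variable R : realType.
Local Notation C := R[i].
Local Open Scope classical_set_scope.

Lemma Re_sum (I : Type) (r : seq I) (P : pred I) (F : I -> C) :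
  complex.Re (\sum_(i <- r | P i) F i) = \sum_(i <- r | P i) complex.Re (F i).
Proof. by apply: big_morph => // -[? ?] [? ?]. Qed.

Lemma Im_sum (I : Type) (r : seq I) (P : pred I) (F : I -> C) :
  complex.Im (\sum_(i <- r | P i) F i) = \sum_(i <- r | P i) complex.Im (F i).
Proof. by apply: big_morph => // -[? ?] [? ?]. Qed.

Lemma cvg_sum_finType (I : finType) (f : I -> nat -> R) (l : I -> R) :
  (forall i, f i @ \oo --> l i) -> (fun N => \sum_i f i N) @ \oo --> \sum_i l i.
Proof. by move=> fl; apply: (cvg_big add_continuous). Qed.

Lemma mul_Complex (a b c d : R) :
  Complex a b * Complex c d = Complex (a * c - b * d) (a * d + b * c) :> C.
Proof. by []. Qed.

Definition expi (t : R) : C := Complex (cos t) (sin t).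

Lemma expiD a b : expi (a + b) = expi a * expi b.
Proof. by rewrite /expi mul_Complex cosD sinD; congr Complex; ring. Qed.

Lemma expi_intpi (z : int) : expi (z%:~R * pi) = (-1) ^+ `|z|.
Proof.
rewrite /expi.
have cs_natpi m : cos (m%:R * pi) = (-1) ^+ m :> R /\ sin (m%:R * pi) = 0 :> R.
  rewrite mulr_natl -[pi *+ m]add0r.
  by rewrite (alternatingn (@cosDpi R)) (alternatingn (@sinDpi R)) cos0 sin0 mulr1 mulr0.
have [-> ->] : cos (z%:~R * pi) = (-1) ^+ `|z| :> R /\ sin (z%:~R * pi) = 0 :> R.
  case: z => m; first exact: cs_natpi.
  by rewrite NegzE intrN mulNr cosN sinN; have [-> ->] := cs_natpi m.+1; rewrite oppr0.
by rewrite -[Complex _ 0]/(real_complex R _) rmorphXn rmorphN1.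
Qed.

Definition exp_partial (z : C) (N : nat) : C := \sum_(k < N) (k`!)%:R^-1 * z ^+ k.

Lemma exp_partial_imag t N :
  exp_partial (Complex 0 t) N =
  Complex (series (cos_coeff t) N) (series (sin_coeff t) N).
Proof.
have powi k : Complex 0 t ^+ k =
    Complex ((~~ odd k)%:R * (-1) ^+ k./2 * t ^+ k)
            ((odd k)%:R * (-1) ^+ k./2 * t ^+ k) :> C.
  elim: k => [|k IH]; first by rewrite expr0 /= !mulr1.
  rewrite exprSr IH mul_Complex /= uphalf_half.
  case: (odd k) => /=; rewrite ?add0n ?add1n ?exprS ?exprSr; apply/eqP;
    rewrite eq_complex /=; apply/andP; split; apply/eqP; ring.
have inv_fact k : ((k`!)%:R^-1 : C) = Complex (k`!%:R^-1) 0.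
  by rewrite -(rmorph_nat (real_complex R)) -fmorphV.
apply/eqP; rewrite eq_complex /exp_partial Re_sum Im_sum /series /= !big_mkord.
apply/andP; split; apply/eqP; apply: eq_bigr => k _.
all: rewrite powi inv_fact mul_Complex /=.
  by rewrite /cos_coeff /= -exprnP; ring.
rewrite /sin_coeff /=; case: k => -[|k] _ /=; first by ring.
by rewrite uphalf_half; case: (odd k) => /=; ring.
Qed.

Lemma cvg_exp_partial_imagM t (w : C) :
  (fun N => complex.Re (exp_partial (Complex 0 t) N * w)) @ \oo -->
    complex.Re (expi t * w) /\
  (fun N => complex.Im (exp_partial (Complex 0 t) N * w)) @ \oo -->
    complex.Im (expi t * w).
Proof.
have cvg_cos : series (cos_coeff t) @ \oo --> cos t.
  by rewrite unlock; exact: is_cvg_series_cos_coeff.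
have cvg_sin : series (sin_coeff t) @ \oo --> sin t.
  by rewrite unlock; exact: is_cvg_series_sin_coeff.
case: w => a b; rewrite /expi mul_Complex.
split; under eq_fun do rewrite exp_partial_imag mul_Complex /=.
  by apply: cvgB; exact: cvgMr_tmp.
by apply: cvgD; exact: cvgMr_tmp.
Qed.

Definition exp_partial_mx m (M : 'M[C]_m) N := \sum_(k < N) (k`!)%:R^-1 *: M ^+ k.

Lemma exp_partial_mx_eigen m (M : 'M[C]_m) (v : 'cV[C]_m) (z : C) N :
  M *m v = z *: v -> exp_partial_mx M N *m v = exp_partial z N *: v.
Proof.
move=> Mv; have Mkv k : M ^+ k *m v = z ^+ k *: v.
  elim: k => [|k IH]; first by rewrite !expr0 mul1mx scale1r.
  by rewrite exprSr -mulmxE -mulmxA Mv -scalemxAr IH scalerA -exprS.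
rewrite mulmx_suml /exp_partial scaler_suml; apply: eq_bigr => k _.
by rewrite -scalemxAl Mkv scalerA.
Qed.

Lemma cexpmx_entry m (M : 'M[C]_m) a b (z : C) :
  (fun N => complex.Re (exp_partial_mx M N a b)) @ \oo --> complex.Re z ->
  (fun N => complex.Im (exp_partial_mx M N a b)) @ \oo --> complex.Im z ->
  cexpmx M a b = z.
Proof. by rewrite /cexpmx mxE => /cvg_lim -> // /cvg_lim -> //; case: z. Qed.

Lemma cexpmx_iscale_delta m (L : 'M[C]_m) (tau : R) (b : 'I_m)
    (I : finType) (v : I -> 'cV[C]_m) (lam : I -> R) :
  (forall i, L *m v i = Complex (lam i) 0 *: v i) ->
  \sum_i v i = delta_mx b 0 ->
  cexpmx (Complex 0 tau *: L) *m delta_mx b 0 = \sum_i expi (tau * lam i) *: v i.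
Proof.
move=> Lv sum_v; set M := Complex 0 tau *: L.
have Mv i : M *m v i = Complex 0 (tau * lam i) *: v i.
  rewrite -scalemxAl Lv scalerA; congr (_ *: _).
  by rewrite mul_Complex !mulr0 mul0r subr0 add0r.
have entry_partial N a : exp_partial_mx M N a b =
    \sum_i exp_partial (Complex 0 (tau * lam i)) N * v i a 0.
  have -> : exp_partial_mx M N a b = col b (exp_partial_mx M N) a 0 by rewrite mxE.
  rewrite colE -sum_v mulmx_sumr summxE.
  by apply: eq_bigr => i _; rewrite (exp_partial_mx_eigen _ (Mv i)) mxE.
apply/matrixP => a j; rewrite ord1 -colE mxE summxE.
under eq_bigr do rewrite mxE.
apply: cexpmx_entry.
- under eq_cvg do rewrite entry_partial Re_sum; rewrite Re_sum.
  apply: cvg_sum_finType => i.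
  by case: (cvg_exp_partial_imagM (tau * lam i) (v i a 0)).
- under eq_cvg do rewrite entry_partial Im_sum; rewrite Im_sum.
  apply: cvg_sum_finType => i.
  by case: (cvg_exp_partial_imagM (tau * lam i) (v i a 0)).
Qed.

End MatrixExponential.

Section PerfectStateTransfer.
Variables (R : realType) (d : nat) (n : 'I_d -> nat) (u : prodK_vertex n).
Hypotheses (n_gt0 : forall j, (0 < n j)%N) (n_even : forall j, ~~ odd (n j)).
Local Notation C := R[i].
Local Notation W := ('I_2 * prodK_vertex n)%type.
Local Notation L := (laplacian C (blowup2 (@prodK_adj d n))).

Definition spectral_part (o : option {ffun 'I_d -> bool}) : W -> C :=
  if o is Some s then fun w => prodK_eigvec C u s w.2 / 2
  else fun w => (-1) ^+ w.1 * ((w.2 == u)%:R / 2).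

Definition spectral_eigval (o : option {ffun 'I_d -> bool}) : int :=
  if o is Some s then prodK_degree n - prodK_eigval n s else prodK_degree n.

Lemma laplacian_spectral_part o :
  L *m cvec_of (spectral_part o) =
  Complex (2 * spectral_eigval o)%:~R 0 *: cvec_of (spectral_part o).
Proof.
rewrite -[Complex _ 0]/(real_complex R _) rmorph_int.
case: o => [s|].
  rewrite (laplacian_blowup2_sym _ (fun x => prodK_eigvec C u s x / 2)).
  apply/matrixP => a j; rewrite !mxE /=.
  under eq_bigr do rewrite -mulrBl mulrA.
  by rewrite -mulr_suml prodK_laplacian_eigen // intrM; field.
rewrite (laplacian_blowup2_antisym _ (fun x => (x == u)%:R / 2)).
by apply/matrixP => a j; rewrite !mxE /= sum_prodK_adj intrM -mulr_natl.
Qed.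

Lemma sum_spectral_parts :
  \sum_o cvec_of (spectral_part o) = evec C ((ord0, u) : W).
Proof.
rewrite evecE big_option; apply/matrixP => a j; rewrite !mxE summxE.
under eq_bigr do rewrite mxE.
rewrite -mulr_suml sum_prodK_eigvec; case: (enum_val a) => l x /=.
by rewrite xpair_eqE; case: (x == u); case: l => -[|[|//]] _ /=; field.
Qed.

Lemma sum_spectral_parts_flip :
  - cvec_of (spectral_part None) + \sum_S cvec_of (spectral_part (Some S)) =
  evec C ((ord_max, u) : W).
Proof.
rewrite evecE; apply/matrixP => a j; rewrite !mxE summxE.
under eq_bigr do rewrite mxE.
rewrite -mulr_suml sum_prodK_eigvec; case: (enum_val a) => l x /=.
by rewrite xpair_eqE; case: (x == u); case: l => -[|[|//]] _ /=; field.
Qed.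

Lemma spectral_phase o :
  expi (pi / 2 * (2 * spectral_eigval o)%:~R) = if o is Some _ then 1 else -1 :> C.
Proof.
have odd_pi z : odd `|z| -> expi (z%:~R * pi) = -1 :> C.
  by move=> z_odd; rewrite expi_intpi -signr_odd z_odd.
have -> : pi / 2 * (2 * spectral_eigval o)%:~R = (spectral_eigval o)%:~R * pi :> R.
  by rewrite intrM; field.
case: o => [S|] /=; last exact/odd_pi/odd_prodK_degree.
rewrite intrB mulrBl -mulNr -intrN expiD !odd_pi ?mulrNN ?mulr1 //.
  by rewrite abszN; exact: odd_prodK_eigval.
exact: odd_prodK_degree.
Qed.

Lemma blowup2_prodK_pst :
  lap_pst R (blowup2 (@prodK_adj d n)) (ord0, u) (ord_max, u).
Proof.
exists (pi / 2); split; first by rewrite divr_gt0 ?pi_gt0.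
exists 1.
rewrite scale1r (cexpmx_iscale_delta _ laplacian_spectral_part sum_spectral_parts).
rewrite big_option spectral_phase scaleN1r -sum_spectral_parts_flip.
by congr (_ + _); apply: eq_bigr => S _; rewrite spectral_phase scale1r.
Qed.

End PerfectStateTransfer.

Unset Implicit Arguments.

Theorem corollary7 (R : realType) (d : nat) (n : 'I_d -> nat) :
  (0 < d)%N ->
  (forall j : 'I_d, (2 <= n j)%N /\ ~~ odd (n j)) ->
  forall u : prodK_vertex n,
    lap_pst R (blowup2 (@prodK_adj d n)) (ord0, u) (ord_max, u).
Proof.
move=> _ n_ge2_even u.
have n_gt0 j : (0 < n j)%N by case: (n_ge2_even j) => /ltnW.
have n_even j : ~~ odd (n j) by case: (n_ge2_even j).
exact: blowup2_prodK_pst n_gt0 n_even.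
Qed.
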